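(* Let $\pi\in\mathsf{G}_{r,n}$ and let $\text{A-code}(\pi)=(c_1^{[e_1]},c_2^{[e_2]},\dots,c_n^{[e_n]})$. Then $$\ell(\pi)=\sum_{i=1}^n\Bigl(i-c_i+\chi(e_i>0)\cdot\bigl(2(c_i-1)+e_i\bigr)\Bigr),$$ where $\chi(A)=1$ if $A$ holds and $0$ otherwise.
   Context: $\mathsf{G}_{r,n}=C_r\wr\mathfrak S_n$: pairs $(\sigma,\mathbf z)$, $\sigma\in\mathfrak S_n$, $\mathbf z\in(\mathbb Z/r\mathbb Z)^n$, written as words $\sigma_1^{[z_1]}\cdots\sigma_n^{[z_n]}$ (base values $\sigma_i$, colors $z_i\in\{0,\dots,r-1\}$), with product $(\sigma,\mathbf z)(\rho,\mathbf w)=(\sigma\rho,\mathbf w+\rho(\mathbf z))$, $\rho(\mathbf z)=(z_{\rho(1)},\dots,z_{\rho(n)})$. $\ell(\pi)$ is the minimal number of factors needed to write $\pi$ as a product of $s_0=1^{[1]}2\cdots n$ and $s_1,\dots,s_{n-1}$, where $s_i$ has base permutation $(i\ i+1)$ and all colors $0$. A-code: set $\pi^{(n)}=\pi$; for $j=n,n-1,\dots,1$, if the letter with base value $j$ sits at position $p$ of the word $\pi^{(j)}$ and has color $t$, put $c_j=p$, $e_j=t$, and let $\pi^{(j-1)}$ be obtained from $\pi^{(j)}$ by deleting this letter. Then $\text{A-code}(\pi)=(c_1^{[e_1]},\dots,c_n^{[e_n]})$. *)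

From HB Require Import structures.
From mathcomp Require Import all_boot all_order all_algebra all_fingroup.
Set Implicit Arguments. Unset Strict Implicit. Unset Printing Implicit Defensive.
Import GRing.Theory.

(* Colors live in Z/rZ, realized (for 0 < r) as the zmodType 'I_(r.-1.+1). *)
Definition color (r : nat) := 'I_(r.-1.+1).

(* An element (sigma, z) of G_{r,n} = C_r wr S_n; sigma i is the base value at
   position i (0-indexed), z i its color. *)
Definition Grn (r n : nat) := ({perm 'I_n} * {ffun 'I_n -> color r})%type.

(* (sigma,z)(rho,w) = (sigma rho, w + rho(z)), with (sigma rho)(i) = sigma(rho i)
   (composition of functions; in MathComp's left-to-right perm product this is
   rho * sigma) and rho(z)_i = z_{rho i}. *)
Definition gmul r n (a b : Grn r n) : Grn r n :=
  ((b.1 * a.1)%g, [ffun i => (b.2 i + a.2 (b.1 i))%R : color r]).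

Definition gone r n : Grn r n := (1%g, [ffun => 0%R : color r]).

Definition s0 r n : Grn r n := (1%g, [ffun i : 'I_n => if (val i == 0)%N then (Zp1 : color r) else (0%R : color r)]).

Definition is_gen r n (g : Grn r n) : bool :=
  (g == s0 r n) ||
  [exists i : 'I_n, exists j : 'I_n,
     (val j == (val i).+1) && (g == (tperm i j, [ffun => 0%R : color r]))].

Definition wprod r n (w : seq (Grn r n)) : Grn r n := foldr (@gmul r n) (gone r n) w.

Definition length_is r n (pi : Grn r n) (k : nat) : Prop :=
  (exists w : seq (Grn r n), all (@is_gen r n) w /\ wprod w = pi /\ size w = k) /\
  (forall w : seq (Grn r n), all (@is_gen r n) w -> wprod w = pi -> k <= size w).

Definition gword r n (pi : Grn r n) : seq (nat * nat) :=
  [seq ((val (pi.1 i)).+1, val (pi.2 i)) | i <- enum 'I_n].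

(* acode_aux j w = [(c_j,e_j); (c_{j-1},e_{j-1}); ...; (c_1,e_1)] where the
   letter of value j sits at (1-based) position c_j of w with color e_j, and
   is deleted before continuing. *)
Fixpoint acode_aux (j : nat) (w : seq (nat * nat)) : seq (nat * nat) :=
  match j with
  | 0 => [::]
  | j'.+1 =>
      let p := find (fun x => x.1 == j) w in
      (p.+1, (nth (0, 0) w p).2) :: acode_aux j' (filter (fun x => x.1 != j) w)
  end.

Definition acode r n (pi : Grn r n) : seq (nat * nat) := rev (acode_aux n (gword pi)).

From mathcomp Require Import all_boot all_order all_algebra all_fingroup zify.
Set Implicit Arguments. Unset Strict Implicit. Unset Printing Implicit Defensive.
Import GRing.Theory.

(* The length is read off the word of pi through the statistic [word_len]:
   every inversion costs 1, every smaller letter to the left of a coloured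
   letter costs 2, and every letter costs its colour.  Removing the letters
   n, n-1, ..., 1 one at a time, as the A-code does, shows that [word_len] is
   the sum of the theorem.  Right multiplication by s_0 raises the colour of
   the first letter by one (mod r) and by s_i swaps the letters at positions i
   and i+1, so a generator changes [word_len] by at most one.  Conversely,
   unless pi is the identity, either the first letter is coloured or some
   adjacent pair of letters is a descent for [word_len], and the matching
   generator lowers [word_len] by exactly one. *)

Definition pair_len (x y : nat * nat) : nat :=
  if y.1 < x.1 then 1 else if (x.1 < y.1) && (0 < y.2) then 2 else 0.

Fixpoint word_len (w : seq (nat * nat)) : nat :=
  if w is x :: w' then \sum_(y <- w') pair_len x y + x.2 + word_len w' else 0.

Definition cross_len (w1 w2 : seq (nat * nat)) : nat :=
  \sum_(x <- w1) \sum_(y <- w2) pair_len x y.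

Lemma word_len_cat w1 w2 :
  word_len (w1 ++ w2) = word_len w1 + word_len w2 + cross_len w1 w2.
Proof.
elim: w1 => [|x w1 IH] /=; first by rewrite /cross_len big_nil addn0.
rewrite IH big_cat /cross_len big_cons /=; lia.
Qed.

Lemma word_len_swap A B a b :
  word_len (A ++ a :: b :: B) + pair_len b a = word_len (A ++ b :: a :: B) + pair_len a b.
Proof.
rewrite !word_len_cat /cross_len.
have -> : \sum_(x <- A) \sum_(y <- a :: b :: B) pair_len x y =
          \sum_(x <- A) \sum_(y <- b :: a :: B) pair_len x y.
  by apply: eq_bigr => x _; rewrite !big_cons; lia.
rewrite /= !big_cons; lia.
Qed.

Lemma word_len_cons_color v e w :
  word_len ((v, e) :: w) = word_len ((v, 0) :: w) + e.
Proof. by rewrite /= addn0 addnAC. Qed.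

Lemma pair_len_swap_le a b : pair_len b a <= pair_len a b + 1.
Proof. by rewrite /pair_len; repeat case: ifP; lia. Qed.

Lemma word_len_sorted0 s : sorted ltn s -> word_len [seq (k, 0) | k <- s] = 0.
Proof.
elim: s => //= k s IH k_s; rewrite IH ?(path_sorted k_s) // big_map big1_seq //=.
move=> j j_s; rewrite /pair_len /= andbF.
have /allP/(_ j j_s) k_j := order_path_min ltn_trans k_s.
by rewrite ltnNge ltnW.
Qed.

Lemma sum_const_in (T : eqType) (s : seq T) (F : T -> nat) c :
  {in s, forall y, F y = c} -> \sum_(y <- s) F y = size s * c.
Proof.
by move=> Fc; rewrite (eq_big_seq (fun=> c)) // big_const_seq count_predT iter_addn_0 mulnC.
Qed.

Lemma word_len_insert_max w1 x w2 : {in w1 ++ w2, forall y, y.1 < x.1} ->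
  word_len (w1 ++ x :: w2) =
  word_len (w1 ++ w2) + size w2 + (0 < x.2) * (2 * size w1 + x.2).
Proof.
move=> lt_x; rewrite !word_len_cat /= /cross_len.
have -> : \sum_(y <- w2) pair_len x y = size w2.
  rewrite (@sum_const_in _ _ _ 1) ?muln1 // => y y_w2.
  by rewrite /pair_len lt_x // mem_cat y_w2 orbT.
have -> : \sum_(z <- w1) \sum_(y <- x :: w2) pair_len z y =
          size w1 * (2 * (0 < x.2)) + \sum_(z <- w1) \sum_(y <- w2) pair_len z y.
  rewrite -(@sum_const_in _ w1 (pair_len^~ x)) -?big_split => [|z z_w1].
    by apply: eq_bigr => z _; rewrite big_cons.
  by rewrite /pair_len ltnNge ltnW ?lt_x ?mem_cat ?z_w1 //=; case: (0 < x.2).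
by have [->|x2_gt0] := posnP x.2; rewrite ?x2_gt0 /=; lia.
Qed.

Definition acode_term (m : nat) (x : nat * nat) : nat :=
  m - x.1 + (0 < x.2) * (2 * (x.1 - 1) + x.2).

(* [acode_aux] lists the code backwards, so the index of its head is its length. *)
Fixpoint acode_sum (a : seq (nat * nat)) : nat :=
  if a is x :: a' then acode_term (size a) x + acode_sum a' else 0.

Lemma sum_acode_term_rev a :
  \sum_(i < size a) acode_term i.+1 (nth (0, 0) (rev a) i) = acode_sum a.
Proof.
elim: a => [|x a IH]; first by rewrite big_ord0.
rewrite /= big_ord_recr /= rev_cons nth_rcons size_rev ltnn eqxx -IH addnC.
by congr (_ + _); apply: eq_bigr => i _; rewrite nth_rcons size_rev ltn_ord.
Qed.

Lemma size_acode_aux j w : size (acode_aux j w) = j.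
Proof. by elim: j w => [|j IH] w //=; rewrite IH. Qed.

Lemma filter_fst_notin (w : seq (nat * nat)) k : k \notin map fst w ->
  [seq y <- w | y.1 != k] = w.
Proof.
by move=> k_w; apply/all_filterP/allP => y y_w; apply: contraNneq k_w => <-; apply: map_f.
Qed.

Lemma acode_aux_split j w1 x w2 : x.1 = j.+1 ->
  j.+1 \notin map fst w1 -> j.+1 \notin map fst w2 ->
  acode_aux j.+1 (w1 ++ x :: w2) = ((size w1).+1, x.2) :: acode_aux j (w1 ++ w2).
Proof.
move=> x1 j_w1 j_w2 /=.
have -> : find (fun y => y.1 == j.+1) (w1 ++ x :: w2) = size w1.
  rewrite find_cat /= x1 eqxx addn0 ifF //; apply/negbTE/hasPn => y y_w1.
  by apply: contraNneq j_w1 => <-; apply: map_f.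
by rewrite nth_cat ltnn subnn filter_cat /= x1 eqxx /= !filter_fst_notin.
Qed.

Lemma acode_sum_acode_aux j w : perm_eq (map fst w) (iota 1 j) ->
  acode_sum (acode_aux j w) = word_len w.
Proof.
elim: j w => [|j IH] w w_perm.
  by have := perm_size w_perm; rewrite size_map => /size0nil ->.
have : j.+1 \in map fst w by rewrite (perm_mem w_perm) mem_iota; lia.
case/mapP => x x_w x1; move: w_perm; case/splitPr: x_w => w1 w2 w_perm.
have w12_perm : perm_eq (map fst (w1 ++ w2)) (iota 1 j).
  rewrite -(perm_cons j.+1); apply: perm_trans (perm_trans _ w_perm) _.
    by rewrite x1 !map_cat -cat1s perm_catCA.
  by rewrite -[X in iota _ X]addn1 iotaD cats1 perm_rcons.
have [j_w1 j_w2] : j.+1 \notin map fst w1 /\ j.+1 \notin map fst w2.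
  have := perm_uniq w_perm; rewrite iota_uniq map_cat cat_uniq /= -x1.
  by case/and3P=> _ /norP[-> _] /andP[->].
rewrite acode_aux_split // /= size_acode_aux IH // word_len_insert_max; last first.
  move=> y y_w12; have : y.1 \in iota 1 j by rewrite -(perm_mem w12_perm) map_f.
  by rewrite -x1 mem_iota add1n => /andP[_].
have := perm_size w12_perm; rewrite size_map size_cat size_iota /acode_term /= => sz.
have [->|x2_gt0] := posnP x.2; rewrite ?x2_gt0 /=; lia.
Qed.

Section Words.
Variables r n : nat.
Implicit Types pi : Grn r n.

Definition gletter pi (i : 'I_n) : nat * nat := ((val (pi.1 i)).+1, val (pi.2 i)).

Lemma gwordE pi : gword pi = map (gletter pi) (enum 'I_n).
Proof. by []. Qed.

Lemma size_gword pi : size (gword pi) = n.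
Proof. by rewrite size_map size_enum_ord. Qed.

Lemma nth_gword pi (i : 'I_n) : nth (0, 0) (gword pi) i = gletter pi i.
Proof. by rewrite gwordE (nth_map i) ?nth_ord_enum // size_enum_ord. Qed.

Lemma gword_inj : injective (@gword r n).
Proof.
move=> [s z] [s' z'] eq_w.
have eq_l i : gletter (s, z) i = gletter (s', z') i by rewrite -!nth_gword eq_w.
by congr (_, _); [apply/permP | apply/ffunP] => i; apply: val_inj; case: (eq_l i).
Qed.

Lemma perm_gword_values pi : perm_eq (map fst (gword pi)) (iota 1 n).
Proof.
have perm_pi : perm_eq (map pi.1 (enum 'I_n)) (enum 'I_n).
  apply: uniq_perm; rewrite ?(map_inj_uniq perm_inj) ?enum_uniq // => i.
  rewrite mem_enum -[i](permKV pi.1) map_f ?mem_enum //.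
rewrite gwordE -map_comp -[1]/(1 + 0) iotaDl -val_enum_ord -map_comp.
rewrite (@eq_map _ _ _ ((succn \o val) \o pi.1)) // map_comp.
by rewrite (@eq_map _ _ (addn 1 \o val) (succn \o val)) // perm_map.
Qed.

Lemma gword_gone : gword (gone r n) = [seq (k, 0) | k <- iota 1 n].
Proof.
rewrite gwordE -[1]/(1 + 0) iotaDl -val_enum_ord -!map_comp.
by apply: eq_map => i; rewrite /gletter /= perm1 ffunE.
Qed.
End Words.

Lemma acode_formula r n (pi : Grn r n) :
  \sum_(i < n)
     (let c := (nth (0, 0) (acode pi) i).1 in
      let e := (nth (0, 0) (acode pi) i).2 in
      i.+1 - c + (0 < e) * (2 * (c - 1) + e))
  = word_len (gword pi).
Proof.
rewrite -(acode_sum_acode_aux (perm_gword_values pi)) -sum_acode_term_rev.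
by rewrite size_acode_aux; apply: eq_bigr.
Qed.

Section GroupLaw.
Variables r n : nat.
Implicit Types a b c : Grn r n.

Lemma gmulA a b c : gmul (gmul a b) c = gmul a (gmul b c).
Proof.
rewrite /gmul /= mulgA; congr (_, _).
by apply/ffunP => i; rewrite !ffunE permM addrA.
Qed.

Lemma gmul1g a : gmul (gone r n) a = a.
Proof.
case: a => s z; rewrite /gmul /= mulg1; congr (_, _).
by apply/ffunP => i; rewrite !ffunE addr0.
Qed.

Lemma gmulg1 a : gmul a (gone r n) = a.
Proof.
case: a => s z; rewrite /gmul /= mul1g; congr (_, _).
by apply/ffunP => i; rewrite !ffunE perm1 add0r.
Qed.

Lemma wprod_rcons (w : seq (Grn r n)) g : wprod (rcons w g) = gmul (wprod w) g.
Proof.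
rewrite /wprod -cats1 foldr_cat /= gmulg1.
by elim: w => /= [|a w ->]; rewrite ?gmul1g ?gmulA.
Qed.

End GroupLaw.

Section LengthStatistic.
Variables (r n : nat) (stat : Grn r n -> nat).
Hypothesis stat_gone : stat (gone r n) = 0.
Hypothesis stat_mul_gen : forall pi g, is_gen g -> stat (gmul pi g) <= (stat pi).+1.
Hypothesis stat_descent : forall pi, pi = gone r n \/
  exists g pi', [/\ is_gen g, pi = gmul pi' g & (stat pi').+1 = stat pi].

Lemma length_is_stat pi : length_is pi (stat pi).
Proof.
split.
  move stat_pi : (stat pi) => k; elim: k pi stat_pi => [|k IH] pi;
    case: (stat_descent pi) => [-> | [g [pi' [gen_g -> <-]]]] stat_pi.
  - by exists [::].
  - by [].
  - by rewrite stat_gone in stat_pi.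
  - have [w [gen_w [<- size_w]]] := IH pi' (succn_inj stat_pi).
    by exists (rcons w g); rewrite all_rcons gen_g gen_w wprod_rcons size_rcons size_w.
move=> w gen_w <-; elim/last_ind: w gen_w => [|w g IH]; first by rewrite stat_gone.
rewrite all_rcons wprod_rcons size_rcons => /andP[gen_g /IH le_w].
exact: leq_trans (stat_mul_gen _ gen_g) _.
Qed.
End LengthStatistic.

Lemma val_Zp1_add_le m (a : 'I_m.+1) : val (Zp1 + a)%R <= (val a).+1.
Proof. by rewrite /=; have := leq_mod (1 %% m.+1 + a) m.+1; have := leq_mod 1 m.+1; lia. Qed.

Lemma val_subr_Zp1 m (a : 'I_m.+1) : 0 < val a -> val (a - Zp1)%R = (val a).-1.
Proof.
set b := (a - Zp1)%R; have -> : a = (Zp1 + b)%R by rewrite addrC subrK.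
clearbody b; clear a; case: m b => [|m] b /=; first by rewrite modn1.
rewrite (modn_small (_ : 1 < m.+2)) // add1n.
have [-> | ne_b] := eqVneq b.+1 m.+2; first by rewrite modnn.
by rewrite modn_small // ltn_neqAle ne_b ltn_ord.
Qed.

Lemma enum_ord_adjacent n (i j : 'I_n) : val j = (val i).+1 ->
  exists A B, enum 'I_n = A ++ i :: j :: B /\
              map (tperm i j) (enum 'I_n) = A ++ j :: i :: B.
Proof.
move=> ij; set e := enum 'I_n.
have e_ij : e = take i e ++ i :: j :: drop j.+1 e.
  rewrite -{1}(cat_take_drop i e) (drop_nth i) ?size_enum_ord ?ltn_ord // nth_ord_enum -ij.
  by rewrite (drop_nth j) ?size_enum_ord ?ltn_ord // nth_ord_enum.
exists (take i e), (drop j.+1 e); split=> //.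
have := enum_uniq 'I_n; rewrite -/e {1}e_ij cat_uniq /=.
case/and3P=> _ /norP[i_A /norP[j_A _]] /and3P[/norP[_ i_B] j_B _].
have tpermD_in s : i \notin s -> j \notin s -> map (tperm i j) s = s.
  move=> i_s j_s; rewrite -[RHS]map_id; apply/eq_in_map => x x_s.
  by rewrite tpermD //; [move: i_s | move: j_s]; apply: contraNneq => ->.
by rewrite {1}e_ij map_cat /= tpermL tpermR !tpermD_in.
Qed.

Section Generators.
Variables r n : nat.
Implicit Types pi : Grn r n.

Definition gswap (i j : 'I_n) : Grn r n := (tperm i j, [ffun => 0%R : color r]).

Lemma is_gen_gswap (i j : 'I_n) : val j = (val i).+1 -> is_gen (gswap i j).
Proof.
by move=> ij; apply/orP; right; apply/existsP; exists i; apply/existsP; exists j;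
  rewrite ij !eqxx.
Qed.

Lemma gswapK (i j : 'I_n) : gmul (gswap i j) (gswap i j) = gone r n.
Proof.
congr (_, _); first by apply/permP => x; rewrite permM tpermK perm1.
by apply/ffunP => x; rewrite !ffunE addr0.
Qed.

Lemma word_len_mul_gswap pi (i j : 'I_n) : val j = (val i).+1 ->
  word_len (gword (gmul pi (gswap i j))) + pair_len (gletter pi i) (gletter pi j) =
  word_len (gword pi) + pair_len (gletter pi j) (gletter pi i).
Proof.
move=> /enum_ord_adjacent[A [B [e_ij e_ji]]].
have -> : gword (gmul pi (gswap i j)) = map (gletter pi) (map (tperm i j) (enum 'I_n)).
  rewrite gwordE -[in RHS]map_comp; apply: eq_map => x.
  by rewrite /gletter /= permM !ffunE add0r.
by rewrite e_ji gwordE e_ij !map_cat /= word_len_swap.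
Qed.
End Generators.

Lemma word_len_mul_s0 r m (pi : Grn r m.+1) :
  word_len (gword (gmul pi (s0 r m.+1))) + val (pi.2 ord0) =
  word_len (gword pi) + val (Zp1 + pi.2 ord0)%R.
Proof.
have -> : gword pi = gletter pi ord0 :: behead (gword pi) by rewrite gwordE enum_ordSl.
have -> : gword (gmul pi (s0 r m.+1)) =
    ((val (pi.1 ord0)).+1, val (Zp1 + pi.2 ord0)%R) :: behead (gword pi).
  rewrite !gwordE enum_ordSl /=; congr (_ :: _).
    by rewrite /gletter /= permM perm1 !ffunE perm1.
  rewrite -!map_comp; apply: eq_map => i.
  by rewrite /gletter /= permM perm1 !ffunE perm1 add0r.
rewrite /gletter word_len_cons_color [in RHS]word_len_cons_color; lia.
Qed.

Lemma word_len_mul_gen r n (pi g : Grn r n) : is_gen g ->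
  word_len (gword (gmul pi g)) <= (word_len (gword pi)).+1.
Proof.
case/orP => [/eqP -> {g} | /existsP[i /existsP[j /andP[/eqP ij /eqP ->]]]].
  case: n pi => [|m] pi; first by rewrite !gwordE enum_ord0.
  by have := word_len_mul_s0 pi; have := val_Zp1_add_le (pi.2 ord0); lia.
have := word_len_mul_gswap pi ij; have := pair_len_swap_le (gletter pi i) (gletter pi j).
rewrite /gswap; lia.
Qed.

Lemma s0_descent r m (pi : Grn r m.+1) : 0 < val (pi.2 ord0) ->
  exists pi',
    pi = gmul pi' (s0 r m.+1) /\ (word_len (gword pi')).+1 = word_len (gword pi).
Proof.
move=> col_pos.
set pi' := (pi.1, [ffun i : 'I_m.+1 => if val i == 0 then (pi.2 i - Zp1)%R else pi.2 i]).
have pi_s0 : pi = gmul pi' (s0 r m.+1).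
  case: pi col_pos @pi' => s z _ /=; rewrite /gmul /= mul1g; congr (_, _).
  by apply/ffunP => i; rewrite !ffunE perm1; case: ifP => _; rewrite ?add0r // addrC subrK.
have col' : pi'.2 ord0 = (pi.2 ord0 - Zp1)%R by rewrite ffunE.
exists pi'; split=> //; have := word_len_mul_s0 pi'.
rewrite -pi_s0 col' [(Zp1 + _)%R]addrC subrK val_subr_Zp1 //; lia.
Qed.

Definition ascent : rel (nat * nat) := fun a b => pair_len a b <= pair_len b a.

Lemma ascent_uncolored a b : a.2 = 0 -> a.1 != b.1 -> ascent a b ->
  a.1 < b.1 /\ b.2 = 0.
Proof.
move: a b => [u e] [v f] /= -> ne_uv; rewrite /ascent /pair_len /= ltnn andbF.
have [lt_vu | le_uv] := ltnP v u.
  by have := ltnW lt_vu; rewrite leqNgt => /negbTE ->.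
have lt_uv : u < v by rewrite ltn_neqAle ne_uv.
by rewrite lt_uv; case: f.
Qed.

Lemma ascending_word w : uniq (map fst w) -> (head (0, 0) w).2 = 0 ->
  sorted ascent w ->
  sorted ltn (map fst w) /\ w = [seq (k, 0) | k <- map fst w].
Proof.
case: w => [|x w] //=; elim: w x => [|y w IH] [u e] /=.
  by move=> _ ->.
move=> /and3P[/norP[ne_uy _] y_w uniq_w] e0 /andP[xy path_w]; rewrite e0 in xy *.
have [lt_uy y2] := ascent_uncolored (a := (u, 0)) erefl ne_uy xy.
have [|path_fst e_w] := IH y _ y2 path_w; first by rewrite /= y_w.
by rewrite lt_uy path_fst -e_w.
Qed.

Lemma ascending_gword_gone r n (pi : Grn r n) : (head (0, 0) (gword pi)).2 = 0 ->
  sorted ascent (gword pi) -> pi = gone r n.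
Proof.
move=> head0 sorted_pi; apply: gword_inj; rewrite gword_gone.
have perm_pi := perm_gword_values pi.
have uniq_pi : uniq (map fst (gword pi)) by rewrite (perm_uniq perm_pi) iota_uniq.
have [ltn_pi ->] := ascending_word uniq_pi head0 sorted_pi.
congr map; apply: (irr_sorted_eq ltn_trans ltnn) ltn_pi (iota_ltn_sorted 1 n) _.
exact: perm_mem.
Qed.

Lemma word_len_descent r n (pi : Grn r n) : pi = gone r n \/
  exists g pi',
    [/\ is_gen g, pi = gmul pi' g & (word_len (gword pi')).+1 = word_len (gword pi)].
Proof.
have [head0 | head_pos] := posnP (head (0, 0) (gword pi)).2; last first.
  case: n pi head_pos => [|m] pi; first by rewrite gwordE enum_ord0.
  rewrite {1}gwordE enum_ordSl => /s0_descent[pi' [-> len_pi']].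
  by right; exists (s0 r m.+1), pi'; rewrite /is_gen eqxx.
have [asc | /forallPn[i /forallPn[j]]] :=
  boolP [forall i : 'I_n, forall j : 'I_n,
           (val j == (val i).+1) ==> ascent (gletter pi i) (gletter pi j)].
  left; apply: ascending_gword_gone head0 _; apply/(sortedP (0, 0)) => k.
  rewrite size_gword => lt_k1; have lt_k : k < n by apply: ltnW.
  have /forallP/(_ (Ordinal lt_k))/forallP/(_ (Ordinal lt_k1)) := asc.
  by rewrite eqxx (nth_gword pi (Ordinal lt_k)) (nth_gword pi (Ordinal lt_k1)).
rewrite negb_imply /ascent -ltnNge => /andP[/eqP ij lt_ji].
right; exists (gswap r i j), (gmul pi (gswap r i j)).
split; [exact: is_gen_gswap | by rewrite gmulA gswapK gmulg1 |].
move: lt_ji; have := word_len_mul_gswap pi ij.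
have := pair_len_swap_le (gletter pi j) (gletter pi i); lia.
Qed.

Theorem lemma3p1 (r n : nat) (hr : 0 < r) (pi : Grn r n) :
  length_is pi
    (\sum_(i < n)
       let c := (nth (0, 0) (acode pi) i).1 in
       let e := (nth (0, 0) (acode pi) i).2 in
       (i.+1 - c + (0 < e) * (2 * (c - 1) + e))).
Proof.
rewrite acode_formula; apply: (length_is_stat (stat := fun pi => word_len (gword pi))).
- by rewrite gword_gone word_len_sorted0 ?iota_ltn_sorted.
- exact: word_len_mul_gen.
- exact: word_len_descent.
Qed.
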